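(* Let $x^0\in\{0,1\}^n$ be the input of the hypermutation operator and let $x^i$ be the $i$-th bitstring it samples. Let $S\subset\{1,\dots,n\}$ be an arbitrary set of indices, and for a bitstring $z$ let $z_S$ denote the subsequence of $z$ consisting of the positions in $S$. For any target string $s^*\in\{0,1\}^{|S|}$ and any integer $m>|S|$, the probability that $x^i_S=s^*$ for all $i\in\{m,\dots,n-m\}$ is at least $\left(\frac{m-|S|+1}{n-|S|+1}\right)^{|S|}$.
   Context: The hypermutation operator on input $x^0\in\{0,1\}^n$ (disregarding its stopping rule) flips the $n$ bit positions one at a time in a uniformly random order, i.e. according to a uniformly random permutation of $\{1,\dots,n\}$; the $i$-th sampled bitstring $x^i$ is the string obtained from $x^0$ after the first $i$ flips, $i=1,\dots,n$. *)

From mathcomp Require Import all_boot all_order all_algebra all_fingroup.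
Set Implicit Arguments. Unset Strict Implicit. Unset Printing Implicit Defensive.

(* The set of positions flipped after the first i flips, when the bit
   positions are flipped in the order sigma 0, sigma 1, ..., sigma (n-1). *)
Definition flipped (n : nat) (sigma : 'S_n) (i : nat) : {set 'I_n} :=
  [set sigma k | k in [set k : 'I_n | k < i]].

Definition hm_sample (n : nat) (x0 : 'I_n -> bool) (sigma : 'S_n) (i : nat)
  : 'I_n -> bool :=
  fun j => x0 j (+) (j \in flipped sigma i).

Definition restrict (n : nat) (z : 'I_n -> bool) (S : {set 'I_n}) : seq bool :=
  [seq z j | j <- enum S].

Definition good_perm (n : nat) (x0 : 'I_n -> bool) (S : {set 'I_n})
  (s : seq bool) (m : nat) (sigma : 'S_n) : bool :=
  [forall i : 'I_n.+1, (m <= i <= n - m) ==>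
     (restrict (hm_sample x0 sigma i) S == s)].

Definition hm_prob (n : nat) (x0 : 'I_n -> bool) (S : {set 'I_n})
  (s : seq bool) (m : nat) : rat :=
  (#|[set sigma : 'S_n | good_perm x0 S s m sigma]|%:R / #|'S_n|%:R)%R.

From mathcomp Require Import all_boot all_order all_algebra all_fingroup.
From mathcomp Require Import zify.
Set Implicit Arguments. Unset Strict Implicit. Unset Printing Implicit Defensive.
Import Order.TTheory GRing.Theory Num.Theory.

(* Write rho = sigma^-1, so that rho p is the time at which position p is
   flipped.  The event certainly occurs if every p in S whose bit must change is
   flipped among the first m flips and every other p in S among the last m.
   Choosing the values rho p greedily, positions of S first, the j-th position
   chosen has at least m - j admissible times left if it lies in S and n - j
   otherwise, so at least prod_(j < |S|) (m - j) * (n - |S|)! permutations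
   qualify; finally (m - j) / (n - j) >= (m - |S| + 1) / (n - |S| + 1). *)

Lemma card_ord_lt n m : m <= n -> #|[pred i : 'I_n | i < m]| = m.
Proof.
move=> le_mn; have widen_inj : injective (widen_ord le_mn).
  by move=> i j /(congr1 val) /= /val_inj.
rewrite -[RHS]card_ord -(card_image widen_inj).
apply: eq_card => i; rewrite inE; apply/idP/mapP => [lt_im | [j _ ->]] //=.
by exists (Ordinal lt_im); rewrite ?mem_enum //; apply: val_inj.
Qed.

Lemma leq_card_predD_seq (T : finType) (A : {pred T}) (s : seq T) :
  #|A| - size s <= #|[predD A & s]|.
Proof.
rewrite leq_subLR -(cardID (mem s) A) leq_add //.
apply: leq_trans (card_size s); apply: subset_leq_card.
by apply/subsetP => x /andP[].
Qed.

Section ConstrainedTuples.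
Variables (T : finType) (P : nat -> {pred T}).

Definition constrained_tuples L :=
  [set t : L.-tuple T | uniq t & [forall j : 'I_L, tnth t j \in P j]].

Lemma rcons_constrained_tuples L (t : L.-tuple T) x :
  t \in constrained_tuples L -> x \in [predD P L & t] ->
  rcons_tuple t x \in constrained_tuples L.+1.
Proof.
rewrite !inE => /andP[uniq_t /forallP t_P] /andP[x_t x_P].
rewrite rcons_uniq x_t uniq_t; apply/forallP => j.
rewrite (tnth_nth x) /= nth_rcons size_tuple; case: ltngtP => [lt_jL | | eq_jL].
- by have := t_P (Ordinal lt_jL); rewrite (tnth_nth x).
- by rewrite ltnNge -ltnS ltn_ord.
- by rewrite eq_jL.
Qed.

Lemma card_constrained_tuples L :
  \prod_(j < L) (#|P j| - j) <= #|constrained_tuples L|.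
Proof.
elim: L => [|L IH].
  rewrite big_ord0 card_gt0; apply/set0Pn; exists [tuple].
  by rewrite inE; apply/forallP => -[].
pose X := [set u : L.-tuple T * T |
            (u.1 \in constrained_tuples L) && (u.2 \in [predD P L & u.1])].
have card_X : #|X| = \sum_(t in constrained_tuples L) #|[predD P L & t]|.
  under eq_bigr do rewrite -sum1_card.
  by rewrite pair_big_dep -sum1_card; apply: eq_bigl => u; rewrite inE.
have le_X : #|constrained_tuples L| * (#|P L| - L) <= #|X|.
  rewrite card_X -sum_nat_const; apply: leq_sum => t _.
  by have := leq_card_predD_seq (P L) t; rewrite size_tuple.
have rcons_inj : injective (fun u : L.-tuple T * T => rcons_tuple u.1 u.2).
  by move=> [t x] [t' x'] /(congr1 val) /rcons_inj [/val_inj -> ->].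
have X_le : #|X| <= #|constrained_tuples L.+1|.
  rewrite -(card_imset X rcons_inj); apply/subset_leq_card/subsetP.
  move=> _ /imsetP[[t x] + ->]; rewrite inE => /andP[t_L x_t].
  exact: rcons_constrained_tuples.
rewrite big_ord_recr /=.
exact: leq_trans (leq_mul IH (leqnn _)) (leq_trans le_X X_le).
Qed.

End ConstrainedTuples.

Lemma card_perm_constrained N (tau : 'S_N) (Q : 'I_N -> {pred 'I_N}) :
  \prod_(j < N) (#|Q (tau j)| - j) <=
    #|[set rho : 'S_N | [forall p, rho p \in Q p]]|.
Proof.
pose P j : {pred 'I_N} := if insub j is Some i then Q (tau i) else pred0.
have -> : \prod_(j < N) (#|Q (tau j)| - j) = \prod_(j < N) (#|P j| - j).
  by apply: eq_bigr => j _; rewrite /P valK.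
apply: leq_trans (card_constrained_tuples P N) _.
pose graph (rho : 'S_N) := [tuple rho (tau i) | i < N].
have graph_inj : injective graph.
  move=> rho rho' eq_graph; apply/permP => p.
  have := congr1 (fun t => tnth t ((tau^-1)%g p)) eq_graph.
  by rewrite !tnth_mktuple permKV.
rewrite -(card_imset _ graph_inj); apply/subset_leq_card/subsetP => t.
rewrite inE => /andP[/tuple_uniqP t_inj /forallP t_P].
have rho_inj : injective (fun p => tnth t ((tau^-1)%g p)).
  by move=> p q /t_inj /perm_inj.
apply/imsetP; exists (perm rho_inj).
  rewrite inE; apply/forallP => p; rewrite permE.
  by have := t_P ((tau^-1)%g p); rewrite /P valK permKV.
by apply: eq_from_tnth => i; rewrite tnth_mktuple permE permK.
Qed.

Lemma exists_perm_prefix n (S : {set 'I_n}) :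
  exists tau : 'S_n, forall j : 'I_n, (tau j \in S) = (j < #|S|).
Proof.
pose order := enum S ++ enum (~: S).
have /tuple_permP[tau order_tau] : perm_eq order (ord_tuple n).
  apply: uniq_perm; rewrite ?enum_uniq //.
    by rewrite cat_uniq !enum_uniq andbT; apply/hasPn => p; rewrite !mem_enum inE.
  by move=> p; rewrite mem_cat !mem_enum inE orbN.
exists tau => j.
have -> : tau j = nth j order j.
  by rewrite order_tau -tnth_nth tnth_mktuple tnth_ord_tuple.
rewrite nth_cat -cardE; case: ltnP => [lt_jS | le_Sj].
  by rewrite -mem_enum mem_nth // -cardE.
apply: negbTE; rewrite -in_setC -mem_enum mem_nth // -cardE.
by rewrite ltn_subLR // cardsC card_ord.
Qed.

Section RatioBounds.
Variable R : numFieldType.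
Local Open Scope ring_scope.

Lemma ler_falling_ratio (j k m N : nat) :
  (j < k)%N -> (k <= m)%N -> (m <= N)%N ->
  (m - k).+1%:R / (N - k).+1%:R <= (m - j)%:R / (N - j)%:R :> R.
Proof.
move=> lt_jk le_km le_mN.
rewrite ler_pdivrMr ?ltr0Sn // mulrAC ler_pdivlMr ?ltr0n ?subn_gt0; last by lia.
by rewrite -!natrM ler_nat; nia.
Qed.

Lemma expr_ratio_le_prod_div_fact (k m N : nat) (c : 'I_N -> nat) :
  (k < m)%N -> (m <= N)%N ->
  (forall j : 'I_N, (if j < k then m - j else N - j) <= c j)%N ->
  ((m - k).+1%:R / (N - k).+1%:R) ^+ k <= (\prod_(j < N) c j)%:R / N`!%:R :> R.
Proof.
move=> lt_km le_mN le_c; set r := _ / _.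
have r_ge0 : 0 <= r by rewrite divr_ge0.
have -> : r ^+ k = \prod_(j < N) (if (j < k)%N then r else 1).
  by rewrite -big_mkcond prodr_const card_ord_lt //; lia.
rewrite -ffactnn ffact_prod !natr_prod -prodf_div; apply: ler_prod => j _.
have N_j_gt0 : 0 < (N - j)%:R :> R by rewrite ltr0n subn_gt0.
have := le_c j; case: ltnP => [lt_jk | le_kj] le_cj.
  rewrite r_ge0 /=; apply: le_trans (ler_falling_ratio lt_jk (ltnW lt_km) le_mN) _.
  by rewrite ler_pM2r ?invr_gt0 // ler_nat.
by rewrite ler01 ler_pdivlMr // mul1r ler_nat.
Qed.

End RatioBounds.

Lemma flippedE n (sigma : 'S_n) i p :
  (p \in flipped sigma i) = ((sigma^-1)%g p < i).
Proof.
apply/imsetP/idP => [[k]|lt_pi]; first by rewrite inE => lt_ki ->; rewrite permK.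
by exists ((sigma^-1)%g p); rewrite ?inE ?permKV.
Qed.

Definition target n (S : {set 'I_n}) (s : seq bool) p :=
  nth false s (index p (enum S)).

Lemma restrict_eq n (z : 'I_n -> bool) (S : {set 'I_n}) s :
  size s = #|S| -> {in S, forall p, z p = target S s p} -> restrict z S = s.
Proof.
move=> size_s z_S; apply: (@eq_from_nth _ false); first by rewrite size_map -cardE.
rewrite size_map -cardE => j lt_jS; have p0 := enum_default (Ordinal lt_jS).
rewrite cardE in lt_jS; rewrite (nth_map p0) // z_S.
  by rewrite /target index_uniq ?enum_uniq.
by rewrite -mem_enum mem_nth.
Qed.

(* A position flipped at a time in [flip_window m true] has been flipped at
   every step i >= m; one flipped in [flip_window m false] is still unflipped at
   every step i <= n - m. *)
Definition flip_window n m (must_flip : bool) : {pred 'I_n} :=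
  if must_flip then [pred t : 'I_n | t < m] else [pred t : 'I_n | n - m <= t].

Lemma card_flip_window n m must_flip :
  m <= n -> #|@flip_window n m must_flip| = m.
Proof.
move=> le_mn; case: must_flip; first exact: card_ord_lt.
have := cardC [pred t : 'I_n | t < n - m]; rewrite card_ord_lt ?leq_subr // card_ord.
rewrite (eq_card (B := @flip_window n m false)) => [|t].
  by move/(canRL (addKn _)) ->; rewrite subKn.
by rewrite !inE -leqNgt.
Qed.

Lemma good_perm_of_windows n (x0 : 'I_n -> bool) (S : {set 'I_n}) s m
    (sigma : 'S_n) :
  size s = #|S| ->
  {in S, forall p, (sigma^-1)%g p \in flip_window m (x0 p != target S s p)} ->
  good_perm x0 S s m sigma.
Proof.
move=> size_s in_windows; apply/forallP => i; apply/implyP => /andP[le_mi le_in].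
apply/eqP/restrict_eq => // p p_S; rewrite /hm_sample flippedE.
suff -> : ((sigma^-1)%g p < i) = (x0 p != target S s p).
  by case: (x0 p); case: (target S s p).
move: (in_windows p p_S); rewrite /flip_window; case: ifP => _ /= t_window.
  exact: leq_trans t_window le_mi.
by apply/negbTE; rewrite -leqNgt (leq_trans le_in t_window).
Qed.

Theorem lemma3 (n : nat) (x0 : 'I_n -> bool) (S : {set 'I_n})
  (s : seq bool) (m : nat) :
  size s = #|S| -> #|S| < m -> m <= n ->
  (((m - #|S|).+1%:R / (n - #|S|).+1%:R) ^+ #|S| <= hm_prob x0 S s m)%R.
Proof.
move=> size_s lt_Sm le_mn.
have [tau tau_S] := exists_perm_prefix S.
pose Q p : {pred 'I_n} :=
  if p \in S then flip_window m (x0 p != target S s p) else predT.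
rewrite /hm_prob card_Sn.
apply: le_trans (expr_ratio_le_prod_div_fact _
  (c := fun j => #|Q (tau j)| - j) lt_Sm le_mn _) _.
  by move=> j; rewrite /Q tau_S; case: ltnP => _; rewrite ?card_flip_window ?card_ord.
rewrite ler_wpM2r ?invr_ge0 ?ler0n // ler_nat.
apply: leq_trans (card_perm_constrained tau Q) _.
rewrite -(card_imset _ (@invg_inj _)); apply/subset_leq_card/subsetP.
move=> _ /imsetP[rho + ->]; rewrite !inE => /forallP rho_Q.
apply: good_perm_of_windows => // p p_S.
by have := rho_Q p; rewrite /Q p_S invgK.
Qed.
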